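(* Let $E$ be a finite nonempty set, $f:2^E\to\mathbb{N}$ an integral polymatroid rank function, $d\in\mathbb{N}$, $\vec t\in\mathbb{N}^E$, and let $C_e:\mathbb{N}\times\mathbb{N}\to\mathbb{R}_+$, $e\in E$, be regular functions. Let $\vec x$ be an optimal solution of $P(\vec t,d)$, let $e^*\in E$ and $\vec t'=\vec t+\chi_{e^*}$. Define $g^*\in\arg\min_{g\in D_{e^*}(\vec x)} C^+_g(x_g;t_g)$ if $D_{e^*}(\vec x)\neq\emptyset$, and $g^*=e^*$ otherwise. Then the better (with respect to the objective of $P(\vec t',d)$) of the two solutions $\vec x$ and $\vec x-\chi_{e^*}+\chi_{g^*}$ is an optimal solution of $P(\vec t',d)$.
   Context: $\mathbb{N}=\{0,1,2,\dots\}$. A set function $f:2^E\to\mathbb{N}$ is an integral polymatroid rank function if $f(\emptyset)=0$, $f(U)\le f(V)$ for $U\subseteq V$, and $f(U)+f(V)\ge f(U\cup V)+f(U\cap V)$ for all $U,V\subseteq E$. For $\vec x\in\mathbb{N}^E$ and $U\subseteq E$, $x(U)=\sum_{e\in U}x_e$. For $d\in\mathbb{N}$, $\mathbb{B}_f(d)=\{\vec x\in\mathbb{N}^E: x(U)\le f(U)\ \forall U\subseteq E,\ x(E)=d\}$. $P(\vec t,d)$ denotes the problem: minimize $\sum_{e\in E}C_e(x_e;t_e)$ subject to $\vec x\in\mathbb{B}_f(d)$. For $C:\mathbb{N}\times\mathbb{N}\to\mathbb{R}$, $C^-(x;t)=C(x;t)-C(x-1;t)$ (for $x\ge1$) and $C^+(x;t)=C(x+1;t)-C(x;t)$.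 $C$ is regular if $C^-(x;t)\le C^-(x;t+1)$ and $C^-(x;t+1)\le C^-(x+1;t)$ for all $x\ge 1$, $t\in\mathbb{N}$. $\chi_e\in\mathbb{N}^E$ is the unit vector of coordinate $e$. For $\vec x\in\mathbb{B}_f(d)$ and $e\in E$, $D_e(\vec x)=\{g\in E\setminus\{e\}: \vec x+\chi_g-\chi_e\in\mathbb{B}_f(d)\}$. *)

From mathcomp Require Import all_boot all_order all_algebra.
Set Implicit Arguments. Unset Strict Implicit. Unset Printing Implicit Defensive.
Import Order.TTheory GRing.Theory Num.Theory.

Section Defs.
Variable E : finType.

Definition polymatroid (f : {set E} -> nat) : Prop :=
  [/\ f set0 = 0%N,
      (forall U V : {set E}, U \subset V -> (f U <= f V)%N) &
      (forall U V : {set E}, (f (U :|: V) + f (U :&: V) <= f U + f V)%N)].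

Definition xsum (x : E -> nat) (U : {set E}) : nat := (\sum_(e in U) x e)%N.

Definition inB (f : {set E} -> nat) (d : nat) (x : E -> nat) : Prop :=
  (forall U : {set E}, (xsum x U <= f U)%N) /\ xsum x [set: E] = d.

(* x + chi_g - chi_e  (adding first, then truncated subtraction; this is
   the exact vector whenever it lies in N^E) *)
Definition shift (x : E -> nat) (g e : E) : E -> nat :=
  fun a => (x a + (a == g) - (a == e))%N.

Definition Dset (f : {set E} -> nat) (d : nat) (x : E -> nat) (e : E) : E -> Prop :=
  fun g => g != e /\ inB f d (shift x g e).

Variable R : realFieldType.

Local Open Scope ring_scope.

Definition Cminus (C : nat -> nat -> R) (x t : nat) : R := C x t - C x.-1 t.
Definition Cplus (C : nat -> nat -> R) (x t : nat) : R := C x.+1 t - C x t.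

Definition regular (C : nat -> nat -> R) : Prop :=
  forall x t : nat, (1 <= x)%N ->
    Cminus C x t <= Cminus C x t.+1 /\ Cminus C x t.+1 <= Cminus C x.+1 t.

Definition obj (C : E -> nat -> nat -> R) (t x : E -> nat) : R :=
  \sum_(e : E) C e (x e) (t e).

Definition optimal (f : {set E} -> nat) (d : nat) (C : E -> nat -> nat -> R)
  (t x : E -> nat) : Prop :=
  inB f d x /\ forall y : E -> nat, inB f d y -> obj C t x <= obj C t y.

End Defs.

From mathcomp Require Import all_boot all_order all_algebra.
From mathcomp Require Import zify lra.
From Stdlib Require Import Classical.
Import Order.TTheory GRing.Theory Num.Theory.
Set Implicit Arguments. Unset Strict Implicit.

(* B_f(d) has the simultaneous exchange property: if x_a < z_a, some b with
   z_b < x_b makes both z - chi_a + chi_b and x + chi_a - chi_b feasible; b is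
   found between the largest z-tight set avoiding a and the smallest x-tight set
   containing a.  Such exchanges move any feasible z towards x, and by the
   optimality of x and regularity (each C_e is discretely convex in x, and its
   increment in t grows with x) none of them increases the cost.  Hence, under
   t' = t + chi_e, a solution z with z_e >= x_e costs at least as much as x; one
   with z_e = x_e - 1 costs at least as much as x + chi_g - chi_e, which by the
   choice of g is t-optimal among the solutions with z_e < x_e; and one with
   z_e < x_e - 1 is improved by exchanges until one of these cases occurs. *)

Section Sums.
Variable E : finType.
Implicit Types (w x z : E -> nat) (A B U V : {set E}).

Lemma lt_gt_neq x z (a b : E) : (x a < z a)%N -> (z b < x b)%N -> a != b.
Proof.
by move=> lt_a lt_b; apply/eqP => eq_ab; move: lt_b; rewrite -eq_ab ltnNge ltnW.
Qed.

Lemma xsum_setID w A B : xsum w A = (xsum w (A :&: B) + xsum w (A :\: B))%N.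
Proof. by rewrite /xsum (big_setID B). Qed.

Lemma xsum_setU_setI w U V :
  (xsum w (U :|: V) + xsum w (U :&: V) = xsum w U + xsum w V)%N.
Proof.
rewrite (xsum_setID w (U :|: V) U) (xsum_setID w V U) setUK setDUl setDv set0U.
by rewrite [V :&: U]setIC; lia.
Qed.

Lemma eq_xsum w1 w2 U : w1 =1 w2 -> xsum w1 U = xsum w2 U.
Proof. by move=> eq_w; apply: eq_bigr => a _. Qed.

Lemma xsum_chi (q : E) U : xsum (fun a => nat_of_bool (a == q)) U = (q \in U).
Proof.
rewrite /xsum; case: (boolP (q \in U)) => qU; last first.
  by rewrite big1 // => a aU; case: eqP => // aq; rewrite -aq aU in qU.
by rewrite (bigD1 q) //= eqxx big1 // => a /andP [_ /negbTE ->].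
Qed.

Lemma xsum_shift w (p q : E) U : p != q -> (0 < w q)%N ->
  (xsum (shift w p q) U + (q \in U) = xsum w U + (p \in U))%N.
Proof.
move=> pq wq; rewrite -!xsum_chi /xsum -!big_split /=; apply: eq_bigr => a _.
rewrite /shift; case: (eqVneq a q) => [->|aq]; last by rewrite subn0 addn0.
by rewrite eq_sym (negbTE pq); lia.
Qed.

Lemma xsum_lt_exists x z A (a : E) :
  (xsum z A <= xsum x A)%N -> a \in A -> (x a < z a)%N ->
  exists2 b, b \in A & (z b < x b)%N.
Proof.
move=> le_zx aA lt_a; case: (boolP [exists b in A, z b < x b]).
  by case/existsP=> b /andP [bA lt_b]; exists b.
move/exists_inPn => ge_zx; suff: (xsum x A < xsum z A)%N by rewrite ltnNge le_zx.
rewrite /xsum (bigD1 a) // [X in (_ < X)%N](bigD1 a) //= -addSn leq_add //.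
by apply: leq_sum => b /andP [bA _]; rewrite leqNgt ge_zx.
Qed.

End Sums.

Section BasePolytope.
Variables (E : finType) (f : {set E} -> nat) (d : nat).
Hypothesis pf : polymatroid f.
Implicit Types (w x z : E -> nat) (S T U V : {set E}).

Lemma inB_eq w1 w2 : w1 =1 w2 -> inB f d w1 -> inB f d w2.
Proof. by move=> eq_w [le_w sum_w]; split=> [U|]; rewrite -(eq_xsum _ eq_w). Qed.

Lemma tight_setU_setI w U V : (forall W, xsum w W <= f W)%N ->
  xsum w U = f U -> xsum w V = f V ->
  xsum w (U :|: V) = f (U :|: V) /\ xsum w (U :&: V) = f (U :&: V).
Proof.
case: pf => _ _ submod le_w tU tV.
have := xsum_setU_setI w U V; have := submod U V.
have := le_w (U :|: V); have := le_w (U :&: V); lia.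
Qed.

Lemma shift_inB w p q : inB f d w -> p != q -> (0 < w q)%N ->
  (forall U, xsum w U = f U -> p \in U -> q \in U) -> inB f d (shift w p q).
Proof.
move=> [le_w sum_w] pq wq tight_pq; split=> [U|]; last first.
  by have := xsum_shift [set: E] pq wq; rewrite !inE; lia.
have := xsum_shift U pq wq; have := le_w U.
case: (boolP (p \in U)) => pU; case: (boolP (q \in U)) => qU; try lia.
have : xsum w U != f U by apply/eqP => /tight_pq /(_ pU); rewrite (negbTE qU).
lia.
Qed.

Lemma max_tight_notin z a : (forall W, xsum z W <= f W)%N ->
  exists S, [/\ xsum z S = f S, a \notin S &
                forall U, xsum z U = f U -> a \notin U -> U \subset S].
Proof.
move=> le_z; pose P U := (xsum z U == f U) && (a \notin U).
have [tS aS] : xsum z (\bigcup_(U | P U) U) = f (\bigcup_(U | P U) U) /\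
               a \notin \bigcup_(U | P U) U.
  apply: (big_ind (fun S => xsum z S = f S /\ a \notin S)).
  - by case: pf => f0 _ _; rewrite /xsum big_set0 f0 inE.
  - move=> U V [tU aU] [tV aV]; rewrite inE negb_or aU aV.
    by case: (tight_setU_setI le_z tU tV).
  - by move=> U /andP [/eqP].
exists (\bigcup_(U | P U) U); split=> // U tU aU.
by apply: bigcup_sup; rewrite /P tU eqxx.
Qed.

Lemma min_tight_in x a : inB f d x ->
  exists T, [/\ a \in T, xsum x T = f T \/ T = setT &
                forall U, xsum x U = f U -> a \in U -> T \subset U].
Proof.
move=> [le_x _]; pose P U := (xsum x U == f U) && (a \in U).
have [aT tT] : a \in \bigcap_(U | P U) U /\
  (xsum x (\bigcap_(U | P U) U) = f (\bigcap_(U | P U) U) \/ \bigcap_(U | P U) U = setT).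
  apply: (big_ind (fun T => a \in T /\ (xsum x T = f T \/ T = setT))).
  - by rewrite inE; split=> //; right.
  - move=> U V [aU tU] [aV tV]; rewrite inE aU aV; split=> //.
    case: tU tV => [tU [tV|->]|-> tV]; rewrite ?setIT ?setTI; [|by left|by []].
    by left; case: (tight_setU_setI le_x tU tV).
  - by move=> U /andP [/eqP -> ->]; split=> //; left.
exists (\bigcap_(U | P U) U); split=> // U tU aU.
by apply: bigcap_inf; rewrite /P tU eqxx.
Qed.

Lemma xsum_setD_le x z S T : inB f d x -> inB f d z ->
  xsum z S = f S -> xsum x T = f T \/ T = setT ->
  (xsum z (T :\: S) <= xsum x (T :\: S))%N.
Proof.
move=> [le_x sum_x] [le_z sum_z] tS [tT|->].
  have := xsum_setID z (T :|: S) S; rewrite setDUl setDv setU0 setIC setKU.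
  have := xsum_setID x T S; case: pf => _ _ submod.
  have := submod T S; have := le_z (T :|: S); have := le_x (T :&: S); lia.
have := xsum_setID z setT S; have := xsum_setID x setT S; rewrite !setTI.
have := le_x S; lia.
Qed.

Lemma inB_exchange x z a : inB f d x -> inB f d z -> (x a < z a)%N ->
  exists b, [/\ (z b < x b)%N, inB f d (shift z b a) & inB f d (shift x a b)].
Proof.
move=> Bx Bz lt_a.
have [S [tS aS maxS]] := max_tight_notin a Bz.1.
have [T [aT tT minT]] := min_tight_in a Bx.
have aTS : a \in T :\: S by rewrite inE aS aT.
have [b bTS lt_b] := xsum_lt_exists (xsum_setD_le Bx Bz tS tT) aTS lt_a.
move: bTS; rewrite inE => /andP [bS bT].
have ba : b != a by rewrite eq_sym (lt_gt_neq lt_a lt_b).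
exists b; split=> //.
- apply: shift_inB => //; first lia.
  move=> U tU bU; apply: contraNT bS => aU; exact: subsetP (maxS U tU aU) b bU.
- apply: shift_inB => //; [by rewrite eq_sym | lia |].
  move=> U tU aU; exact: subsetP (minT U tU aU) b bT.
Qed.

Lemma exchange_below x z e : inB f d x -> inB f d z -> (z e < x e)%N ->
  exists a, [/\ a != e, (x a < z a)%N & inB f d (shift x a e)].
Proof.
move=> Bx Bz lt_e; have [a [lt_a Bxa _]] := inB_exchange Bz Bx lt_e.
by exists a; rewrite (lt_gt_neq lt_a lt_e).
Qed.

End BasePolytope.

Definition excess (E : finType) (x z : E -> nat) : nat := xsum (fun i => z i - x i) setT.

Lemma excess_shift (E : finType) (x z : E -> nat) (a b : E) :
  (x a < z a)%N -> (z b < x b)%N -> (excess x (shift z b a) < excess x z)%N.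
Proof.
move=> lt_a lt_b.
have ab := lt_gt_neq lt_a lt_b.
suff -> : excess x z =
    (excess x (shift z b a) + xsum (fun i => nat_of_bool (i == a)) setT)%N.
  by rewrite xsum_chi inE addn1.
rewrite /excess /xsum -big_split /=; apply: eq_bigr => i _; rewrite /shift.
case: (eqVneq i a) => [->|ia]; first by rewrite (negbTE ab); lia.
by case: (eqVneq i b) => [->|ib] /=; lia.
Qed.

Local Open Scope ring_scope.

Section RegularCosts.
Variables (R : realFieldType) (C : nat -> nat -> R).
Hypothesis rC : regular C.

Lemma Cplus_nondecreasing s :
  {homo (fun k => Cplus C k s) : p q / (p <= q)%N >-> p <= q}.
Proof.
apply: Order.NatMonotonyTheory.nondecnP => k.
by have [le1 le2] := @rC k.+1 s isT; apply: le_trans le1 le2.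
Qed.

Lemma Cplus_time_succ k s : Cplus C k s.+1 <= Cplus C k.+1 s.
Proof. exact: (@rC k.+1 s isT).2. Qed.

Lemma Ctime_incr_nondecreasing s :
  {homo (fun k => C k s.+1 - C k s) : p q / (p <= q)%N >-> p <= q}.
Proof.
apply: Order.NatMonotonyTheory.nondecnP => k.
by have [+ _] := @rC k.+1 s isT; rewrite /Cminus /=; lra.
Qed.

End RegularCosts.

Section Objective.
Variables (E : finType) (R : realFieldType) (C : E -> nat -> nat -> R).

Definition incr (t : E -> nat) (e : E) : E -> nat := fun a => (t a + (a == e))%N.

Lemma obj_shift t w p q : p != q -> (0 < w q)%N ->
  obj C t (shift w p q) =
    obj C t w + Cplus (C p) (w p) (t p) - Cplus (C q) (w q).-1 (t q).
Proof.
move=> pq wq; suff : obj C t (shift w p q) - obj C t w =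
    Cplus (C p) (w p) (t p) - Cplus (C q) (w q).-1 (t q) by lra.
rewrite /obj -sumrB (bigD1 p) //= (bigD1 q) /=; last by rewrite eq_sym.
rewrite big1 => [|a /andP [ap aq]].
  rewrite /shift eqxx (negbTE pq) eq_sym (negbTE pq) eqxx addn0 subn0 addn1 subn1.
  by rewrite /Cplus prednK // addr0; lra.
by rewrite /shift (negbTE ap) (negbTE aq) addn0 subn0 subrr.
Qed.

Lemma obj_incr t w e :
  obj C (incr t e) w = obj C t w + (C e (w e) (t e).+1 - C e (w e) (t e)).
Proof.
suff : obj C (incr t e) w - obj C t w = C e (w e) (t e).+1 - C e (w e) (t e) by lra.
rewrite /obj -sumrB (bigD1 e) //= big1 => [|a ae].
  by rewrite /incr eqxx addn1 addr0.
by rewrite /incr (negbTE ae) addn0 subrr.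
Qed.

End Objective.

Section Optimality.
Variables (E : finType) (R : realFieldType) (f : {set E} -> nat) (d : nat).
Variables (C : E -> nat -> nat -> R) (t x : E -> nat).
Hypotheses (pf : polymatroid f) (rC : forall e, regular (C e)).
Hypothesis xopt : optimal f d C t x.

Lemma optimal_exchange_le p q : p != q -> (0 < x q)%N -> inB f d (shift x p q) ->
  Cplus (C q) (x q).-1 (t q) <= Cplus (C p) (x p) (t p).
Proof. by move=> pq xq /xopt.2; rewrite obj_shift //; lra. Qed.

Lemma exchange_descent s z a b : inB f d z -> (x a < z a)%N -> (z b < x b)%N ->
  inB f d (shift x a b) -> s a = t a ->
  Cplus (C b) (z b) (s b) <= Cplus (C b) (x b).-1 (t b) ->
  obj C s (shift z b a) <= obj C s z.
Proof.
move=> Bz lt_a lt_b Bxab sa le_b.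
have ab := lt_gt_neq lt_a lt_b.
have ba : b != a by rewrite eq_sym.
have le_a : Cplus (C a) (x a) (t a) <= Cplus (C a) (z a).-1 (t a).
  by apply: (Cplus_nondecreasing (rC a)); lia.
have xb : (0 < x b)%N by lia.
have := optimal_exchange_le ab xb Bxab.
rewrite obj_shift //; last lia.
by rewrite sa; lra.
Qed.

Lemma shift_optimal_below e g : Dset f d x e g ->
  (forall g', Dset f d x e g' -> Cplus (C g) (x g) (t g) <= Cplus (C g') (x g') (t g')) ->
  forall z, inB f d z -> (z e < x e)%N -> obj C t (shift x g e) <= obj C t z.
Proof.
move=> [ge Bxg] gmin z; have [n] := ubnP (excess x z).
elim: n z => // n IH z lt_n Bz lt_e.
have [a [ae lt_a Bxa]] := exchange_below pf xopt.1 Bz lt_e.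
have [b [lt_b Bzb Bxab]] := inB_exchange pf xopt.1 Bz lt_a.
have le_z : Cplus (C b) (z b) (t b) <= Cplus (C b) (x b).-1 (t b).
  by apply: (Cplus_nondecreasing (rC _)); lia.
have [eq_be|be] := eqVneq b e.
- (* a lies in D_e(x) and z + chi_a - chi_e is feasible: compare y with x, x with it *)
  subst b; have le_x := xopt.2 _ Bzb.
  have le_ga := gmin a (conj ae Bxa).
  have le_a : Cplus (C a) (x a) (t a) <= Cplus (C a) (z a).-1 (t a).
    by apply: (Cplus_nondecreasing (rC _)); lia.
  have ea : e != a by rewrite eq_sym.
  rewrite obj_shift // in le_x; last lia.
  by rewrite obj_shift //; [lra | lia].
- apply: (le_trans _ (exchange_descent Bz lt_a lt_b Bxab (erefl _) le_z)).
  apply: IH => //; first by have := excess_shift lt_a lt_b; lia.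
  by rewrite /shift ![e == _]eq_sym (negbTE ae) (negbTE be) addn0 subn0.
Qed.

Lemma incr_optimal_above e z : inB f d z -> (x e <= z e)%N ->
  obj C (incr t e) x <= obj C (incr t e) z.
Proof.
move=> Bz le_e; rewrite !obj_incr.
have := xopt.2 _ Bz; have := Ctime_incr_nondecreasing (rC e) (t e) le_e; lra.
Qed.

Lemma incr_optimal_split e y : y e = (x e).-1 ->
  (forall z, inB f d z -> (z e < x e)%N -> obj C t y <= obj C t z) ->
  forall z, inB f d z ->
    obj C (incr t e) x <= obj C (incr t e) z \/ obj C (incr t e) y <= obj C (incr t e) z.
Proof.
move=> ye yopt z; have [n] := ubnP (excess x z).
elim: n z => // n IH z lt_n Bz.
have [le_e|lt_e] := leqP (x e) (z e); first by left; exact: incr_optimal_above.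
have [le_e1|lt_e1] := leqP (x e).-1 (z e).
  have ze : z e = (x e).-1 by lia.
  by right; rewrite !obj_incr ye -ze; have := yopt z Bz lt_e; lra.
have [a [ae lt_a Bxa]] := exchange_below pf xopt.1 Bz lt_e.
have [b [lt_b Bzb Bxab]] := inB_exchange pf xopt.1 Bz lt_a.
have le_b : Cplus (C b) (z b) (incr t e b) <= Cplus (C b) (x b).-1 (t b).
  rewrite /incr; have [->|be] := eqVneq b e; last first.
    by rewrite addn0; apply: (Cplus_nondecreasing (rC _)); lia.
  (* the extra time unit at e is paid for by the slack z_e < x_e - 1 *)
  rewrite addn1; apply: le_trans (Cplus_time_succ (rC e) _ _) _.
  by apply: (Cplus_nondecreasing (rC _)); lia.
have ta : incr t e a = t a by rewrite /incr (negbTE ae) addn0.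
have desc := exchange_descent Bz lt_a lt_b Bxab ta le_b.
have [le_x|le_y] := IH _ (leq_trans (excess_shift lt_a lt_b) lt_n) Bzb.
- by left; exact: le_trans le_x desc.
- by right; exact: le_trans le_y desc.
Qed.

End Optimality.

Lemma better_of_two_optimal (E : finType) (R : realFieldType) (f : {set E} -> nat) d
    (C : E -> nat -> nat -> R) (t x y : E -> nat) :
  inB f d x -> inB f d y ->
  (forall z, inB f d z -> obj C t x <= obj C t z \/ obj C t y <= obj C t z) ->
  if obj C t x <= obj C t y then optimal f d C t x else optimal f d C t y.
Proof.
move=> Bx By xy_le; case: ifPn => [le_xy|]; last rewrite -ltNge => lt_yx.
- by split=> // z /xy_le [//|]; apply: le_trans le_xy.
- by split=> // z /xy_le [|//]; apply: le_trans (ltW lt_yx).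
Qed.

Theorem theorem3p2 (E : finType) (R : realFieldType)
  (f : {set E} -> nat) (d : nat) (t : E -> nat)
  (C : E -> nat -> nat -> R) (x : E -> nat) (estar gstar : E) :
  (0 < #|E|)%N ->
  polymatroid f ->
  (forall e a b, 0 <= C e a b) ->
  (forall e, regular (C e)) ->
  optimal f d C t x ->
  ((exists g, Dset f d x estar g) ->
     Dset f d x estar gstar /\
     forall g, Dset f d x estar g ->
       Cplus (C gstar) (x gstar) (t gstar) <= Cplus (C g) (x g) (t g)) ->
  (~ (exists g, Dset f d x estar g) -> gstar = estar) ->
  let t' := fun a => (t a + (a == estar))%N in
  let y := shift x gstar estar in
  if obj C t' x <= obj C t' y then optimal f d C t' x else optimal f d C t' y.
Proof.
move=> _ pf _ rC xopt gstar_spec gstar_dflt t' y.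
suff [By xy_le] : inB f d y /\
    forall z, inB f d z -> obj C t' x <= obj C t' z \/ obj C t' y <= obj C t' z.
  exact: better_of_two_optimal xopt.1 By xy_le.
have [D_ne|D_empty] := classic (exists g, Dset f d x estar g).
  have [[ge By] gstar_min] := gstar_spec D_ne; split=> //.
  apply: (incr_optimal_split pf rC xopt); last exact: shift_optimal_below.
  by rewrite /y /shift eqxx eq_sym (negbTE ge) addn0 subn1.
have gs := gstar_dflt D_empty; split.
  by apply: inB_eq xopt.1 => a; rewrite /y /shift gs addnK.
move=> z Bz; left; apply: (incr_optimal_above rC xopt Bz); rewrite leqNgt.
apply/negP => lt_e; apply: D_empty.
by have [a [ae _ Bxa]] := exchange_below pf xopt.1 Bz lt_e; exists a.
Qed.
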